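(* Let $R$ be a finite set of terminals, let $T$ be a spanning tree on vertex set $R$ (possibly with parallel edges in its ambient multigraph) with nonnegative edge costs $c$, and let $x$ be any feasible solution of the constraint system \[ \sum_{K:\,K\cap S\neq\varnothing} x_K(|K\cap S|-1)\le |S|-1\ \ \forall\, \varnothing\neq S\subseteq R,\qquad \sum_K x_K(|K|-1)=|R|-1,\qquad x_K\ge 0, \] where $K$ ranges over subsets of $R$ with $|K|\ge2$. Then \[ \sum_K x_K\,\mathrm{drop}_T(K)\ \ge\ c(T). \]
   Context: For $K\subseteq R$, $T/K$ denotes the multigraph obtained from $T$ by identifying all terminals of $K$ into a single vertex (edges keep their costs; loops may be discarded). $\mathrm{Drop}_T(K)=E(T)\setminus E(\mathrm{MST}(T/K))$ is the set of edges of $T$ not contained in a chosen minimum spanning tree of $T/K$, and $\mathrm{drop}_T(K)$ is its total cost, i.e. $\mathrm{drop}_T(K)=c(T)-\mathrm{mst}(T/K)$, where $\mathrm{mst}$ denotes the cost of a minimum spanning tree. $c(T)$ is the total cost of the edges of $T$. *)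

From HB Require Import structures.
From mathcomp Require Import all_boot all_order all_algebra.
Set Implicit Arguments. Unset Strict Implicit. Unset Printing Implicit Defensive.
Import Order.TTheory GRing.Theory Num.Theory.
Local Open Scope ring_scope.

(* The tree T lives on the terminal set V (= R, a finType); its edges are the
   elements of the finType E, edge e having endpoints (u e, v e).  Parallel
   edges are allowed.  For K : {set V}, the multigraph T/K is modelled on the
   vertex set V with all vertices of K identified: two vertices of V are
   adjacent in (the subgraph with edge set F of) T/K if they are both in K
   (identified) or joined by an edge of F. *)

Definition cadj (V E : finType) (u v : E -> V) (K : {set V}) (F : {set E}) : rel V :=
  fun a b => ((a \in K) && (b \in K)) ||
    [exists e in F, ((u e == a) && (v e == b)) || ((u e == b) && (v e == a))].

Definition is_loop (V E : finType) (u v : E -> V) (K : {set V}) (e : E) : bool :=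
  (u e == v e) || ((u e \in K) && (v e \in K)).

(* With K = set0 this is an ordinary spanning tree. *)
Definition spanning_tree_contr (V E : finType) (u v : E -> V) (K : {set V})
    (F : {set E}) : bool :=
  [forall a, forall b, connect (cadj u v K F) a b] &&
  [forall e in F, ~~ is_loop u v K e && ~~ connect (cadj u v K (F :\ e)) (u e) (v e)].

Definition cost (Rf : numDomainType) (E : finType) (c : E -> Rf) (F : {set E}) : Rf :=
  \sum_(e in F) c e.

Definition is_mst (Rf : numDomainType) (V E : finType) (u v : E -> V)
    (c : E -> Rf) (K : {set V}) (m : Rf) : Prop :=
  (exists2 F, spanning_tree_contr u v K F & cost c F = m) /\
  (forall F, spanning_tree_contr u v K F -> m <= cost c F).

Definition dropT (Rf : numDomainType) (E : finType) (c : E -> Rf) (mstK : Rf) : Rf :=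
  cost c setT - mstK.

From HB Require Import structures.
From mathcomp Require Import all_boot all_order all_algebra zify ring lra.
Set Implicit Arguments. Unset Strict Implicit. Unset Printing Implicit Defensive.
Import Order.TTheory GRing.Theory Num.Theory.

(* Sort the edges of T by cost. For each K, Kruskal's algorithm run on T/K in
   this order keeps a spanning tree F_K of T/K, so drop_T(K) >= c(T \ F_K).
   By Abel summation along the sorted order it suffices that every suffix Q
   of the order satisfies sum_K x_K |Q \ F_K| >= |Q|.  If P is the
   complementary prefix, the forest T[P] has |Q| + 1 components, and
   |Q \ F_K| is one less than the number of components of T[P] met by K,
   because every edge of Q kept by Kruskal merges two components of T[P]/K.
   Summing the subtour constraints over the components of T[P] and using the
   equality constraint gives sum_K x_K (#components met by K - 1) >= |Q|. *)

Section Labels.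
Variables (T : finType) (r : rel T).
Hypothesis r_sym : connect_sym r.
Implicit Types (lab : T -> T) (L : {set T}).

Definition labels lab := forall a b, (lab a == lab b) = connect r a b.

Lemma labels_root : labels (fingraph.root r).
Proof. exact: root_connect. Qed.

Lemma connect_label (T' : eqType) (f : T -> T') x y :
  (forall a b, r a b -> f a = f b) -> connect r x y -> f x = f y.
Proof.
move=> rf xy; have cl : closed r [pred z | f z == f x].
  by move=> a b /rf; rewrite !inE => ->.
by have := closed_connect cl xy; rewrite !inE eqxx => /esym/eqP.
Qed.

Lemma n_comp_labels lab : labels lab -> n_comp r predT = #|lab @: setT|.
Proof.
move=> labP; have -> : lab @: setT = lab @: [set z | roots r z].
  apply/setP=> y; apply/imsetP/imsetP=> -[z _ ->]; last by exists z.
  exists (fingraph.root r z); first by rewrite inE roots_root.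
  by apply/eqP; rewrite labP connect_root.
rewrite card_in_imset; first by apply: eq_card => z; rewrite !inE andbT.
move=> z1 z2; rewrite !inE => /eqP <- /eqP <-.
by move/eqP; rewrite labP -(root_connect r_sym) !(root_root r_sym) => /eqP.
Qed.

Definition fuse_label L p lab y := if lab y \in L then p else lab y.

Lemma card_fuse_label L p lab : L \subset lab @: setT -> p \in L ->
  (#|fuse_label L p lab @: setT| + #|L| = #|lab @: setT| + 1)%N.
Proof.
move=> LS pL; set S := lab @: setT.
have -> : fuse_label L p lab @: setT = p |: (S :\: L).
  apply/setP=> y; apply/imsetP/setU1P => [[z _ ->]|].
    rewrite /fuse_label; case: ifP => zL; [by left | right].
    by rewrite !inE zL imset_f.
  case=> [->|/setDP[yS yL]].
    case/imsetP: (subsetP LS p pL) => z _ pz.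
    by exists z; rewrite //= /fuse_label -pz pL.
  by case/imsetP: yS => z _ yz; exists z; rewrite // /fuse_label -yz (negbTE yL).
rewrite cardsU1 !inE pL /= -addnA -(cardsID L S) (setIidPr LS).
by rewrite addnC [(#|S :\: L| + _)%N]addnC.
Qed.

Lemma labels_fuse L w lab :
  (forall x y, lab x = lab y -> connect r x y) ->
  (forall x, lab x \in L -> connect r x w) ->
  (forall x y, r x y -> fuse_label L (lab w) lab x = fuse_label L (lab w) lab y) ->
  labels (fuse_label L (lab w) lab).
Proof.
move=> lab_conn L_conn r_fuse; set f := fuse_label L (lab w) lab.
have to_w z : exists2 z', connect r z z' & lab z' = f z.
  by rewrite /f /fuse_label; case: ifP => [/L_conn|_]; [exists w | exists z].
move=> a b; apply/eqP/idP => [fab|]; last exact: connect_label.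
have [a' aa' ea] := to_w a; have [b' bb' eb] := to_w b.
apply: connect_trans aa' (connect_trans (lab_conn a' b' _) _).
  by rewrite ea eb.
by rewrite r_sym.
Qed.
End Labels.

Section Contraction.
Variables (V E : finType) (u v : E -> V).
Implicit Types (K : {set V}) (A F : {set E}).

Definition joins e a b := ((u e == a) && (v e == b)) || ((u e == b) && (v e == a)).

Definition connects K F := forall a b, connect (cadj u v K F) a b.

Lemma cadj_sym K A : symmetric (cadj u v K A).
Proof.
move=> a b; rewrite /cadj andbC; congr (_ || _); apply: eq_existsb => e.
by rewrite orbC.
Qed.

Lemma connect_cadj_sym K A : connect_sym (cadj u v K A).
Proof. exact/sym_connect_sym/cadj_sym. Qed.

Lemma cadj_contr K A a b : a \in K -> b \in K -> cadj u v K A a b.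
Proof. by rewrite /cadj => -> ->. Qed.

Lemma cadj_edge K A e : e \in A -> cadj u v K A (u e) (v e).
Proof.
by move=> eA; apply/orP; right; apply/exists_inP; exists e; rewrite // /joins !eqxx.
Qed.

Lemma cadj_contrE K A a b :
  cadj u v K A a b = (a \in K) && (b \in K) || cadj u v set0 A a b.
Proof. by rewrite /cadj !inE. Qed.

Lemma cadj_setU1 K A e a b :
  cadj u v K (e |: A) a b = joins e a b || cadj u v K A a b.
Proof.
rewrite /cadj orbCA; congr (_ || _).
apply/exists_inP/orP => [[f /setU1P[->|fA] jf]|[je|/exists_inP[f fA jf]]].
- by left.
- by right; apply/exists_inP; exists f.
- by exists e; rewrite ?setU11.
- by exists f; rewrite ?setU1r.
Qed.

Lemma connect_cadj_sub K K' A A' : K \subset K' -> A \subset A' ->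
  subrel (connect (cadj u v K A)) (connect (cadj u v K' A')).
Proof.
move=> /subsetP KK' /subsetP AA'; apply: connect_sub => a b.
case/orP=> [/andP[aK bK]|/exists_inP[e eA je]]; apply: connect1.
  by apply: cadj_contr; apply: KK'.
by apply/orP; right; apply/exists_inP; exists e; first exact: AA'.
Qed.

Lemma labels_cadj_root K A :
  labels (cadj u v K A) (fingraph.root (cadj u v K A)).
Proof. exact/labels_root/connect_cadj_sym. Qed.

Lemma n_comp_cadj K A lab :
  labels (cadj u v K A) lab -> n_comp (cadj u v K A) predT = #|lab @: setT|.
Proof. exact/n_comp_labels/connect_cadj_sym. Qed.

Lemma connects_contr K F : connects set0 F -> connects K F.
Proof. by move=> F0 a b; apply: connect_cadj_sub (F0 a b); rewrite ?sub0set ?subxx. Qed.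

Lemma spanning_tree_connects K F : spanning_tree_contr u v K F -> connects K F.
Proof. by case/andP=> /forallP conn _ a; apply/forallP: (conn a). Qed.

Lemma connect_joins K A e a b :
  joins e a b -> connect (cadj u v K A) (u e) (v e) -> connect (cadj u v K A) a b.
Proof.
by case/orP=> /andP[/eqP <- /eqP <-] // uv; rewrite connect_cadj_sym.
Qed.

Lemma connect_cadj_setD1 K F e : e \in F ->
  connect (cadj u v K (F :\ e)) (u e) (v e) ->
  subrel (connect (cadj u v K F)) (connect (cadj u v K (F :\ e))).
Proof.
move=> eF uv; apply: connect_sub => a b.
by rewrite -{1}(setD1K eF) cadj_setU1 => /orP[/connect_joins->|/connect1].
Qed.

Lemma n_comp_connects K F (a0 : V) :
  connects K F -> n_comp (cadj u v K F) predT = 1%N.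
Proof.
move=> Fconn; rewrite (n_comp_cadj (labels_cadj_root K F)).
suff -> : fingraph.root (cadj u v K F) @: setT = [set fingraph.root (cadj u v K F) a0].
  exact: cards1.
apply/setP=> y; rewrite inE; apply/imsetP/eqP => [[a _ ->]|->]; last by exists a0.
by apply/(fingraph.rootP (connect_cadj_sym K F)); rewrite connect_cadj_sym.
Qed.

Lemma n_comp_setU1 K A e :
  (n_comp (cadj u v K (e |: A)) predT + ~~ connect (cadj u v K A) (u e) (v e)
   = n_comp (cadj u v K A) predT)%N.
Proof.
set lab := fingraph.root (cadj u v K A).
have labA : labels (cadj u v K A) lab := labels_cadj_root K A.
set L := [set lab (u e); lab (v e)].
have AeA : subrel (connect (cadj u v K A)) (connect (cadj u v K (e |: A))).
  by apply: connect_cadj_sub => //; apply: subsetUr.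
have uv : connect (cadj u v K (e |: A)) (v e) (u e).
  by rewrite connect_cadj_sym; apply/connect1/cadj_edge/setU11.
have fuseP : labels (cadj u v K (e |: A)) (fuse_label L (lab (u e)) lab).
  apply: labels_fuse => [|x y|x|x y].
  - exact: connect_cadj_sym.
  - by move/eqP; rewrite labA => /AeA.
  - rewrite !inE !labA => /orP[/AeA //|/AeA xv]; exact: connect_trans xv uv.
  rewrite cadj_setU1 /fuse_label => /orP[|/connect1]; last by rewrite -labA => /eqP ->.
  by case/orP=> /andP[/eqP <- /eqP <-]; rewrite !inE !eqxx ?orbT.
rewrite (n_comp_cadj fuseP) (n_comp_cadj labA).
have LS : L \subset lab @: setT.
  by apply/subsetP=> y; rewrite !inE => /orP[] /eqP ->; apply: imset_f.
have := card_fuse_label LS (setU11 _ _).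
by rewrite cards2 labA addnS addn1 => -[].
Qed.

Lemma n_comp_contract K A k : k \in K ->
  (n_comp (cadj u v K A) predT + #|fingraph.root (cadj u v set0 A) @: K|
   = n_comp (cadj u v set0 A) predT + 1)%N.
Proof.
move=> kK; set lab := fingraph.root (cadj u v set0 A).
have labA : labels (cadj u v set0 A) lab := labels_cadj_root set0 A.
have A_KA : subrel (connect (cadj u v set0 A)) (connect (cadj u v K A)).
  by apply: connect_cadj_sub => //; apply: sub0set.
have fuseP : labels (cadj u v K A) (fuse_label (lab @: K) (lab k) lab).
  apply: labels_fuse => [|x y|x|x y].
  - exact: connect_cadj_sym.
  - by move/eqP; rewrite labA => /A_KA.
  - case/imsetP=> k' k'K /eqP; rewrite labA => /A_KA xk'.
    by apply: connect_trans xk' (connect1 (cadj_contr _ k'K kK)).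
  rewrite cadj_contrE /fuse_label => /orP[/andP[xK yK]|/connect1].
    by rewrite !imset_f.
  by rewrite -labA => /eqP ->.
rewrite (n_comp_cadj fuseP) (n_comp_cadj labA).
by apply: card_fuse_label; [apply/imsetS/subsetT | apply: imset_f].
Qed.

End Contraction.

Section MinimumSpanningTree.
Variables (Rf : realFieldType) (V E : finType) (u v : E -> V) (c : E -> Rf).
Local Open Scope ring_scope.
Hypothesis c_ge0 : forall e, 0 <= c e.
Implicit Types (K : {set V}) (F : {set E}).

Lemma redundant_edge K F : connects u v K F -> ~~ spanning_tree_contr u v K F ->
  exists2 e, e \in F & connects u v K (F :\ e).
Proof.
move=> Fconn; rewrite /spanning_tree_contr negb_and => /orP[/negP[]|].
  by apply/forallP=> a; apply/forallP=> b; apply: Fconn.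
case/forall_inPn=> e eF; rewrite negb_and !negbK => loop_or_cycle.
exists e => // a b; apply: connect_cadj_setD1 (Fconn a b) => //.
case/orP: loop_or_cycle => // /orP[/eqP ->|/andP[uK vK]]; first exact: connect0.
exact/connect1/cadj_contr.
Qed.

Lemma mst_le_cost K m F : is_mst u v c K m -> connects u v K F -> m <= cost c F.
Proof.
case=> _ mst_min; have [n] := ubnP #|F|; elim: n F => // n IH F.
rewrite ltnS => leFn Fconn.
have [/mst_min //|/(redundant_edge Fconn)[e eF Feconn]] :=
  boolP (spanning_tree_contr u v K F).
apply: le_trans (IH _ _ Feconn) _; first by rewrite (cardsD1 e F) eF in leFn.
by rewrite /cost (big_setD1 e eF) lerDr.
Qed.

End MinimumSpanningTree.

Lemma set_rcons (T : finType) (p : seq T) e : [set:: rcons p e] = e |: [set:: p].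
Proof. by apply/setP=> f; rewrite !inE mem_rcons inE. Qed.

Section Kruskal.
Variables (V E : finType) (u v : E -> V) (s : seq E) (a0 : V).
Hypotheses (s_uniq : uniq s) (mem_s : forall e, e \in s).
Hypothesis tree : spanning_tree_contr u v set0 setT.
Implicit Types (K : {set V}) (p q : seq E).

(* With s sorted by cost this is Kruskal's forest of T/K, but only the fact
   that it connects T/K is ever used: mst_le_cost bounds mst(T/K) by the cost
   of any connecting edge set, so s need not be sorted here. *)
Definition kruskal K :=
  [set e | ~~ connect (cadj u v K [set:: take (index e s) s]) (u e) (v e)].

Lemma set_s : [set:: s] = setT.
Proof. by apply/setP=> e; rewrite !inE mem_s. Qed.

Lemma mem_kruskal K p e q : s = p ++ e :: q ->
  (e \in kruskal K) = ~~ connect (cadj u v K [set:: p]) (u e) (v e).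
Proof.
move=> s_pq; have ep : e \notin p.
  by move: s_uniq; rewrite s_pq cat_uniq /= => /and3P[_ /norP[/negP ep _] _]; apply/negP.
by rewrite inE s_pq index_cat (negbTE ep) /= eqxx addn0 take_size_cat.
Qed.

Lemma count_kruskal K p q : s = p ++ q ->
  (count (mem (kruskal K)) q + n_comp (cadj u v K setT) predT
   = n_comp (cadj u v K [set:: p]) predT)%N.
Proof.
elim: q p => [|e q IH] p s_pq; first by rewrite -set_s s_pq cats0.
rewrite /= (mem_kruskal K s_pq) -(n_comp_setU1 u v K [set:: p] e) -set_rcons.
by rewrite -(IH (rcons p e)) ?cat_rcons // [RHS]addnC addnA.
Qed.

Lemma connects_kruskal K : connects u v K (kruskal K).
Proof.
suff prefix p q : s = p ++ q ->
    subrel (connect (cadj u v K [set:: p])) (connect (cadj u v K (kruskal K))).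
  move=> a b; apply: (prefix s [::]); first by rewrite cats0.
  by rewrite set_s; apply/connects_contr/spanning_tree_connects.
elim/last_ind: p q => [|p e IH] q s_pq.
  by rewrite set_nil; apply: connect_cadj_sub; rewrite ?sub0set ?subxx.
have s_peq : s = p ++ e :: q by rewrite s_pq cat_rcons.
apply: connect_sub => a b; rewrite set_rcons cadj_setU1.
case/orP=> [je|/connect1/(IH _ s_peq) //].
apply: connect_joins je _; have [eK|] := boolP (e \in kruskal K).
  exact/connect1/cadj_edge.
by rewrite (mem_kruskal K s_peq) negbK => /(IH _ s_peq).
Qed.

Lemma n_comp_tree_prefix p q : s = p ++ q ->
  n_comp (cadj u v set0 [set:: p]) predT = (size q).+1.
Proof.
elim: q p => [|e q IH] p s_pq.
  rewrite cats0 in s_pq; rewrite -s_pq set_s.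
  exact: n_comp_connects a0 (spanning_tree_connects tree).
have s_peq : s = p ++ e :: q by [].
rewrite -(n_comp_setU1 u v set0 [set:: p] e) -set_rcons (IH (rcons p e)) ?cat_rcons //.
suff -> : ~~ connect (cadj u v set0 [set:: p]) (u e) (v e) by rewrite addn1.
case/andP: tree => _ /forall_inP/(_ e (in_setT e))/andP[_].
apply: contra; apply: connect_cadj_sub => //; apply/subsetP=> f.
rewrite !inE andbT => fp; apply: contraTneq fp => ->.
by move: s_uniq; rewrite s_peq cat_uniq /= => /and3P[_ /norP[]].
Qed.

Lemma card_components_meeting K k p q : k \in K -> s = p ++ q ->
  #|fingraph.root (cadj u v set0 [set:: p]) @: K|
  = (count (predC (mem (kruskal K))) q).+1.
Proof.
move=> kK s_pq; have := n_comp_contract u v [set:: p] kK.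
have KT := connects_contr K (spanning_tree_connects tree).
rewrite -(count_kruskal K s_pq) (n_comp_tree_prefix s_pq) (n_comp_connects a0 KT).
have := count_predC (mem (kruskal K)) q; lia.
Qed.
End Kruskal.

Local Open Scope ring_scope.

Lemma sum_card_fibers (V T : finType) (f : V -> T) (K : {set V}) :
  (\sum_(y in f @: K) #|K :&: f @^-1: [set y]| = #|K|)%N.
Proof.
rewrite -[RHS]sum1_card (partition_big_imset f); apply: eq_bigr => y _.
by rewrite -sum1_card; apply: eq_bigl => a; rewrite !inE.
Qed.

Section SubtourPartition.
Variables (Rf : realFieldType) (V : finType) (x : {set V} -> Rf).
Hypothesis subtour : forall S : {set V}, S != set0 ->
  \sum_(K : {set V} | (2 <= #|K|)%N && (K :&: S != set0))
     x K * (#|K :&: S|%:R - 1) <= #|S|%:R - 1.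
Hypothesis total :
  \sum_(K : {set V} | (2 <= #|K|)%N) x K * (#|K|%:R - 1) = #|V|%:R - 1.

Lemma partition_bound (T : finType) (f : V -> T) :
  #|f @: setT|%:R - 1 <= \sum_(K : {set V} | (2 <= #|K|)%N) x K * (#|f @: K|%:R - 1).
Proof.
pose B y := f @^-1: [set y].
have meet K y : (y \in f @: setT) && (K :&: B y != set0) = (y \in f @: K).
  apply/andP/imsetP => [[_ /set0Pn[a]]|[a aK ->]].
    by rewrite !inE => /andP[aK /eqP <-]; exists a.
  by split; [apply: imset_f | apply/set0Pn; exists a; rewrite !inE aK /=].
pose lhs := \sum_(y in f @: setT)
  \sum_(K : {set V} | (2 <= #|K|)%N && (K :&: B y != set0)) x K * (#|K :&: B y|%:R - 1).
have lhs_le : lhs <= #|V|%:R - #|f @: setT|%:R.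
  have Bne y : y \in f @: setT -> B y != set0.
    by case/imsetP=> a _ ->; apply/set0Pn; exists a; rewrite !inE.
  apply: le_trans (ler_sum _ (fun y fy => subtour (Bne y fy))) _.
  rewrite sumrB sumr_const -natr_sum -cardsT -(sum_card_fibers f setT).
  by rewrite (eq_bigr (fun y => #|setT :&: B y|)) // => y _; rewrite setTI.
have lhsE : lhs = \sum_(K : {set V} | (2 <= #|K|)%N) x K * (#|K|%:R - #|f @: K|%:R).
  rewrite /lhs; under eq_bigr do rewrite big_mkcondr /=.
  rewrite exchange_big; apply: eq_bigr => K _; rewrite -big_mkcondr -mulr_sumr /=.
  rewrite (eq_bigl _ _ (meet K)) sumrB sumr_const -natr_sum.
  by rewrite (eq_bigr (fun y => #|K :&: B y|)) // sum_card_fibers.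
have -> : \sum_(K : {set V} | (2 <= #|K|)%N) x K * (#|f @: K|%:R - 1)
          = #|V|%:R - 1 - lhs.
  by rewrite lhsE -total -sumrB; apply: eq_bigr => K _; ring.
lra.
Qed.

End SubtourPartition.

Section SortedWeights.
Variables (Rf : realFieldType) (T : Type) (c w : T -> Rf).

Lemma ler_sum_sorted_mul (l : seq T) (a : Rf) :
  sorted (fun e f => c e <= c f) l -> all (fun e => a <= c e) l ->
  (forall p q, l = p ++ q -> 0 <= \sum_(e <- q) w e) ->
  a * \sum_(e <- l) w e <= \sum_(e <- l) c e * w e.
Proof.
elim: l a => [|e l IH] a /=; first by rewrite !big_nil mulr0.
move=> sorted_el /andP[ae _] tails_ge0; rewrite !big_cons.
have ce_le : all (fun f => c e <= c f) l.
  by apply: order_path_min sorted_el => ? ? ?; apply: le_trans.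
have tails_l p q : l = p ++ q -> 0 <= \sum_(f <- q) w f.
  by move=> l_pq; apply: (tails_ge0 (e :: p)); rewrite l_pq.
have w_ge0 : 0 <= w e + \sum_(f <- l) w f.
  by have := tails_ge0 [::] (e :: l) erefl; rewrite big_cons.
apply: le_trans (ler_wpM2r w_ge0 ae) _; rewrite mulrDr lerD2l.
exact: IH (path_sorted sorted_el) ce_le tails_l.
Qed.

Lemma sum_sorted_mul_ge0 (l : seq T) :
  sorted (fun e f => c e <= c f) l -> (forall e, 0 <= c e) ->
  (forall p q, l = p ++ q -> 0 <= \sum_(e <- q) w e) ->
  0 <= \sum_(e <- l) c e * w e.
Proof.
move=> sorted_l c_ge0 tails_ge0.
have := ler_sum_sorted_mul (a := 0) sorted_l _ tails_ge0; rewrite mul0r; apply.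
by elim: l {sorted_l tails_ge0} => //= e l ->; rewrite c_ge0.
Qed.

End SortedWeights.

Lemma sumr_count (Rf : realFieldType) (T : Type) (a : pred T) (l : seq T) :
  \sum_(e <- l) ((a e)%:R : Rf) = (count a l)%:R.
Proof.
by rewrite -sum1_count natr_sum [RHS]big_mkcond; apply: eq_bigr => e _; case: (a e).
Qed.

Lemma cost_setTD (Rf : realFieldType) (E : finType) (c : E -> Rf) (F : {set E}) :
  cost c setT - cost c F = \sum_e c e * (e \notin F)%:R.
Proof.
rewrite /cost (big_setID F) /= setTI addrC addrK big_mkcond /=.
by apply: eq_bigr => e _; rewrite !inE andbT; case: (e \in F); rewrite ?mulr1 ?mulr0.
Qed.

Section DropBound.
Variables (Rf : realFieldType) (V E : finType) (u v : E -> V).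
Variables (c : E -> Rf) (x : {set V} -> Rf) (mst : {set V} -> Rf).
Implicit Types K : {set V}.
Hypothesis c_ge0 : forall e, 0 <= c e.
Hypothesis tree : spanning_tree_contr u v set0 setT.
Hypothesis subtour : forall S : {set V}, S != set0 ->
  \sum_(K : {set V} | (2 <= #|K|)%N && (K :&: S != set0))
     x K * (#|K :&: S|%:R - 1) <= #|S|%:R - 1.
Hypothesis total :
  \sum_(K : {set V} | (2 <= #|K|)%N) x K * (#|K|%:R - 1) = #|V|%:R - 1.
Hypothesis x_ge0 : forall K : {set V}, (2 <= #|K|)%N -> 0 <= x K.
Hypothesis mstP : forall K : {set V}, (2 <= #|K|)%N -> is_mst u v c K (mst K).

Lemma drop_ge0 K : (2 <= #|K|)%N -> 0 <= dropT c (mst K).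
Proof.
move=> K2; rewrite subr_ge0; apply: mst_le_cost (mstP K2) _ => //.
exact/connects_contr/spanning_tree_connects.
Qed.

Variables (a0 : V) (s : seq E).
Hypotheses (s_uniq : uniq s) (mem_s : forall e, e \in s).

Let mu e := \sum_(K : {set V} | (2 <= #|K|)%N) x K * (e \notin kruskal u v s K)%:R.

Lemma tail_excess_ge0 p q : s = p ++ q -> 0 <= \sum_(e <- q) (mu e - 1).
Proof.
move=> s_pq; set f := fingraph.root (cadj u v set0 [set:: p]).
have card_f : #|f @: setT| = (size q).+1.
  rewrite -(n_comp_tree_prefix a0 s_uniq mem_s tree s_pq).
  exact/esym/n_comp_cadj/labels_cadj_root.
rewrite sumrB; have -> : \sum_(e <- q) (1 : Rf) = (size q)%:R by rewrite -sum1_size natr_sum.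
rewrite /mu exchange_big /= subr_ge0.
have := partition_bound subtour total f; rewrite card_f -natr1 addrK.
move/le_trans; apply; apply: ler_sum => K K2; rewrite -mulr_sumr.
apply: ler_wpM2l; first exact: x_ge0.
have [k kK] : exists k, k \in K by apply/set0Pn; rewrite -card_gt0 (ltn_trans _ K2).
rewrite (card_components_meeting a0 s_uniq mem_s tree kK s_pq) -natr1 addrK.
by rewrite (sumr_count _ (predC (mem (kruskal u v s K)))).
Qed.

Lemma weighted_cost_le :
  \sum_e c e * mu e <= \sum_(K : {set V} | (2 <= #|K|)%N) x K * dropT c (mst K).
Proof.
rewrite /mu; under eq_bigr do rewrite mulr_sumr.
rewrite exchange_big /=; apply: ler_sum => K K2.
under eq_bigr do rewrite mulrCA.
rewrite -mulr_sumr; apply: ler_wpM2l; first exact: x_ge0.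
rewrite -cost_setTD /dropT lerD2l lerN2; apply: mst_le_cost (mstP K2) _ => //.
exact: connects_kruskal.
Qed.

End DropBound.

Theorem lemma1 (Rf : realFieldType) (V E : finType) (u v : E -> V)
    (c : E -> Rf) (x : {set V} -> Rf) (mst : {set V} -> Rf) :
  (forall e, 0 <= c e) ->
  spanning_tree_contr u v set0 setT ->
  (forall S : {set V}, S != set0 ->
     \sum_(K : {set V} | (2 <= #|K|)%N && (K :&: S != set0))
        x K * (#|K :&: S|%:R - 1) <= #|S|%:R - 1) ->
  \sum_(K : {set V} | (2 <= #|K|)%N) x K * (#|K|%:R - 1) = #|V|%:R - 1 ->
  (forall K : {set V}, (2 <= #|K|)%N -> 0 <= x K) ->
  (forall K : {set V}, (2 <= #|K|)%N -> is_mst u v c K (mst K)) ->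
  cost c setT <= \sum_(K : {set V} | (2 <= #|K|)%N) x K * dropT c (mst K).
Proof.
move=> c_ge0 tree subtour total x_ge0 mstP.
have [a0 _|noV] := pickP (@predT V); last first.
  have -> : cost c setT = 0 by rewrite /cost big1 // => e; have := noV (u e).
  by apply: sumr_ge0 => K K2; rewrite mulr_ge0 ?x_ge0 ?(drop_ge0 c_ge0 tree mstP).
pose s := sort (fun e f => c e <= c f) (enum E).
have s_uniq : uniq s by rewrite sort_uniq enum_uniq.
have mem_s e : e \in s by rewrite mem_sort mem_enum.
have s_sorted : sorted (fun e f => c e <= c f) s.
  by apply: sort_sorted => e f; apply: le_total.
apply: le_trans (weighted_cost_le c_ge0 tree x_ge0 mstP s_uniq mem_s).
have tails := tail_excess_ge0 tree subtour total x_ge0 a0 s_uniq mem_s.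
have := sum_sorted_mul_ge0 s_sorted c_ge0 tails.
rewrite (perm_big _ (permEl (perm_sort _ _))) big_enum /=.
under eq_bigr do rewrite mulrBr mulr1.
by rewrite sumrB subr_ge0 /cost (eq_bigl _ _ (in_set (fun=> true))).
Qed.
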